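(* On an event of probability one, the following holds. Let $\mathfrak h$ be an eternal solution, let $s\in\mathbb R$, and let $\gamma:[s,\infty)\to\mathbb R^2$ be an $\mathfrak h$-geodesic. Then for all $t>r\ge s$, the restriction of $\gamma$ to $[r,t]$ is a geodesic from $\gamma(r)$ to $\gamma(t)$. Consequently, $\gamma$ is continuous.
   Context: $\mathcal L$ is the directed landscape (random continuous field $\{\mathcal L(x,s;y,t):s<t\}$ of Dauvergne–Ortmann–Virág). Almost surely it satisfies $\mathcal L(x,s;y,t)=\sup_z(\mathcal L(x,s;z,r)+\mathcal L(z,r;y,t))$ for $s<r<t$. An eternal solution is a function $\mathfrak h:\mathbb R^2\to\mathbb R$ with $\mathfrak h(x,s)=\sup_y\{\mathcal L(x,s;y,t)+\mathfrak h(y,t)\}$ for all $x$ and $s<t$. A space-time path on an interval $J$ is a map $\gamma:J\to\mathbb R^2$ whose second coordinate at time $t$ is $t$. The passage time of $\gamma:[r,t]\to\mathbb R^2$ is the infimum over partitions $r=r_0<\dots<r_k=t$ of $\sum_i\mathcal L(\gamma(r_{i-1});\gamma(r_i))$. A geodesic from $p$ to $q$ is a space-time path from $p$ to $q$ whose passage time equals $\mathcal L(p;q)$. Any path with finite passage time is continuous. An $\mathfrak h$-geodesic is a space-time path $\gamma:[s,\infty)\to\mathbb R^2$ with $\mathcal L(\gamma(r);\gamma(t))=\mathfrak h(\gamma(r))-\mathfrak h(\gamma(t))$ for all $t>r\ge s$. *)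

From HB Require Import structures.
From mathcomp Require Import all_boot all_order all_algebra.
From mathcomp Require Import all_classical all_reals all_analysis.
Set Implicit Arguments. Unset Strict Implicit. Unset Printing Implicit Defensive.
Import Order.TTheory GRing.Theory Num.Theory.
Import numFieldNormedType.Exports.
Local Open Scope classical_set_scope.
Local Open Scope ring_scope.

(* A (deterministic) landscape: L p q = L(x,s;y,t) for p = (x,s), q = (y,t).
   Only meaningful for p.2 < q.2. *)
Definition landscape (R : realType) := R * R -> R * R -> R.

Section Defs.
Variable R : realType.
Implicit Types (L : landscape R).

Definition spacetime_path (J : set R) (gamma : R -> R * R) : Prop :=
  forall u, J u -> (gamma u).2 = u.

(* p = [:: r_1; ...; r_k] with r = r_0 < r_1 < ... < r_k = t, k >= 1 *)
Definition partition (r t : R) (p : seq R) : Prop :=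
  p <> [::] /\ path <%R r p /\ last r p = t.

Fixpoint psum L (gamma : R -> R * R) (a : R) (p : seq R) : R :=
  match p with
  | [::] => 0
  | b :: q => L (gamma a) (gamma b) + psum L gamma b q
  end.

Definition passage_time L (gamma : R -> R * R) (r t : R) : \bar R :=
  ereal_inf [set (psum L gamma r p)%:E | p in partition r t].

Definition geodesic_on L (gamma : R -> R * R) (r t : R) : Prop :=
  spacetime_path `[r, t] gamma /\
  passage_time L gamma r t = (L (gamma r) (gamma t))%:E.

Definition eternal_solution L (h : R * R -> R) : Prop :=
  forall x s t, s < t ->
    (h (x, s))%:E = ereal_sup [set (L (x, s) (y, t) + h (y, t))%:E | y in setT].

Definition h_geodesic L (h : R * R -> R) (s : R) (gamma : R -> R * R) : Prop :=
  spacetime_path `[s, +oo[ gamma /\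
  forall r t, s <= r -> r < t ->
    L (gamma r) (gamma t) = h (gamma r) - h (gamma t).

(* The almost-sure properties of the directed landscape recalled in the
   context: continuity of the field, metric composition, and continuity of
   every path of finite passage time. *)
Definition DL_as_properties L : Prop :=
  (forall p q : R * R, p.2 < q.2 ->
     (fun z : (R * R) * (R * R) => L z.1 z.2) @ ((p, q) : (R * R) * (R * R)) --> L p q) /\
  (forall x s y t r, s < r -> r < t ->
     (L (x, s) (y, t))%:E = ereal_sup [set (L (x, s) (z, r) + L (z, r) (y, t))%:E | z in setT]) /\
  (forall (gamma : R -> R * R) r t, r < t -> spacetime_path `[r, t] gamma ->
     passage_time L gamma r t \is a fin_num ->
     {within `[r, t], continuous gamma}).
End Defs.

(* Along an h-geodesic every increment L(gamma a; gamma b) equals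
   h(gamma a) - h(gamma b), so the sum along any partition of [r, t] telescopes
   to h(gamma r) - h(gamma t) = L(gamma r; gamma t): the infimum defining the
   passage time is taken over a singleton, and gamma restricted to [r, t] is a
   geodesic.  In particular its passage time on each [s, t] is finite, so by
   the almost-sure continuity of finite-passage-time paths gamma is continuous
   on every [s, t], hence on [s, +oo[. *)
From Pilot Require Import Defs.
From HB Require Import structures.
From mathcomp Require Import all_boot all_order all_algebra.
From mathcomp Require Import all_classical all_reals all_analysis.
From mathcomp Require Import lra.
Set Implicit Arguments. Unset Strict Implicit. Unset Printing Implicit Defensive.
Import Order.TTheory GRing.Theory Num.Theory.
Import numFieldNormedType.Exports.
Local Open Scope classical_set_scope.
Local Open Scope ring_scope.

Lemma within_setI_nbhs (T : topologicalType) (A B : set T) (x : T) :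
  nbhs x B -> within (A `&` B) (nbhs x) = within A (nbhs x).
Proof.
move=> Bx; rewrite eqEsubset; split=> U; last first.
  by apply: (within_subset (nbhs_filter x)) => y [].
rewrite /within /=; apply: filter_app2 Bx; near=> y.
by move=> By ABU Ay; apply: ABU.
Unshelve. all: by end_near.
Qed.

Lemma continuous_within_itvcc_itvcy (R : realType) (T : topologicalType)
    (f : R -> T) (s : R) :
  (forall t, s < t -> {within `[s, t], continuous f}) ->
  {within `[s, +oo[, continuous f}.
Proof.
move=> fcont; apply/subspace_continuousP => x.
rewrite /= in_itv /= andbT => sx.
have sx1 : s < x + 1 by lra.
have below_x1 : nbhs x [set y | y <= x + 1].
  by near=> y; apply/ltW; near: y; apply: lt_nbhsl; rewrite ltrDl.
have itv_split : `[s, x + 1]%classic = `[s, +oo[ `&` [set y | y <= x + 1].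
  by apply/seteqP; split=> y; rewrite /= !in_itv /= andbT => /andP.
have /subspace_continuousP /(_ x) := fcont _ sx1.
rewrite itv_split within_setI_nbhs //; apply.
by rewrite /= !in_itv /= sx ltW ?ltrDl.
Unshelve. all: by end_near.
Qed.

Section Telescoping.
Variables (R : realType) (L : landscape R) (gamma : R -> R * R).
Variables (phi : R -> R) (s : R).
Hypothesis L_gamma :
  forall a b, s <= a -> a < b -> L (gamma a) (gamma b) = phi a - phi b.

Lemma psum_telescope p a :
  s <= a -> path <%R a p -> psum L gamma a p = phi a - phi (last a p).
Proof.
elim: p a => [|b p IH] a sa /=; first by rewrite subrr.
move=> /andP[ab pb]; rewrite IH ?L_gamma //; first lra.
exact: le_trans sa (ltW ab).
Qed.

Lemma passage_time_telescope r t :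
  s <= r -> r < t -> passage_time L gamma r t = (phi r - phi t)%:E.
Proof.
move=> sr rt; rewrite /passage_time.
suff -> : [set (psum L gamma r p)%:E | p in Defs.partition r t] =
          [set (phi r - phi t)%:E] by rewrite ereal_inf1.
apply/seteqP; split=> e /=.
  by move=> [p [_ [rp lp]] <-]; rewrite psum_telescope ?lp.
move=> ->; exists [:: t]; first by split=> //=; rewrite rt.
by rewrite /= addr0 L_gamma.
Qed.

End Telescoping.

Section HGeodesic.
Variables (R : realType) (L : landscape R) (h : R * R -> R) (s : R).
Variable gamma : R -> R * R.
Hypothesis gamma_geo : h_geodesic L h s gamma.

Lemma h_geodesic_geodesic_on r t :
  s <= r -> r < t -> geodesic_on L gamma r t.
Proof.
have [path_gamma L_gamma] := gamma_geo.
move=> sr rt; split.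
  move=> u; rewrite /= !in_itv /= => /andP[ru _].
  by apply: path_gamma; rewrite /= in_itv /= andbT (le_trans sr).
by rewrite (passage_time_telescope (phi := h \o gamma) L_gamma) // L_gamma.
Qed.

Lemma h_geodesic_continuous :
  (forall r t, r < t -> spacetime_path `[r, t] gamma ->
     passage_time L gamma r t \is a fin_num ->
     {within `[r, t], continuous gamma}) ->
  {within `[s, +oo[, continuous gamma}.
Proof.
move=> finite_continuous; apply: continuous_within_itvcc_itvcy => t st.
have [path_st pt_st] := h_geodesic_geodesic_on (lexx s) st.
by apply: finite_continuous; rewrite ?pt_st.
Qed.

End HGeodesic.

Theorem lemma3p4 (R : realType) (d : measure_display) (Omega : measurableType d)
  (P : probability Omega R) (L : Omega -> landscape R)
  (hDL : exists E0 : set Omega, [/\ measurable E0, P E0 = 1%E &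
           forall w, E0 w -> DL_as_properties (L w)]) :
  exists E : set Omega, [/\ measurable E, P E = 1%E &
    forall w, E w ->
      forall (h : R * R -> R) (s : R) (gamma : R -> R * R),
        eternal_solution (L w) h -> h_geodesic (L w) h s gamma ->
        (forall r t, s <= r -> r < t -> geodesic_on (L w) gamma r t) /\
        {within `[s, +oo[, continuous gamma}].
Proof.
have [E0 [mE0 PE0 E0_DL]] := hDL.
exists E0; split=> // w E0w h s gamma _ gamma_geo; split.
  exact: (h_geodesic_geodesic_on gamma_geo).
have [_ [_ finite_continuous]] := E0_DL w E0w.
exact: h_geodesic_continuous gamma_geo (finite_continuous gamma).
Qed.
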